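(* There is a first-order formula $\psi(\ell,y)$ in the language of rings such that for every field $R$ of positive characteristic and every $\ell\in L\subseteq R[x]$, the set $\{y\in R[x]: R[x]\models\psi(\ell,y)\}$ equals $\operatorname{PPOW}(\ell)$. The formula does not depend on the characteristic.
   Context: For a field $R$ and single indeterminate $x$, $L\subseteq R[x]$ is the set of polynomials of degree $1$. If $\operatorname{char}(R)=p>0$, $\operatorname{PPOW}(\ell)=\{\ell^{p^k}: k\ge1\}$, the set of powers of $\ell$ whose exponent is a positive power of $p$. *)

From HB Require Import structures.
From mathcomp Require Import all_boot all_order all_algebra.
Set Implicit Arguments. Unset Strict Implicit. Unset Printing Implicit Defensive.
Import GRing.Theory.
Local Open Scope ring_scope.

Inductive rterm : Type :=
  | TVar of nat
  | TZero
  | TOne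
  | TAdd of rterm & rterm
  | TOpp of rterm
  | TMul of rterm & rterm.

Inductive rform : Type :=
  | FEq of rterm & rterm
  | FFalse
  | FNot of rform
  | FAnd of rform & rform
  | FOr of rform & rform
  | FImp of rform & rform
  | FAll of nat & rform
  | FEx of nat & rform.

Section Semantics.
Variable A : comNzRingType.

Fixpoint teval (e : nat -> A) (t : rterm) : A :=
  match t with
  | TVar i => e i
  | TZero => 0
  | TOne => 1
  | TAdd t1 t2 => teval e t1 + teval e t2
  | TOpp t1 => - teval e t1
  | TMul t1 t2 => teval e t1 * teval e t2
  end.

Definition upd (e : nat -> A) (i : nat) (a : A) : nat -> A :=
  fun j => if j == i then a else e j.

Fixpoint fsat (e : nat -> A) (f : rform) : Prop :=
  match f with
  | FEq t1 t2 => teval e t1 = teval e t2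
  | FFalse => False
  | FNot g => ~ fsat e g
  | FAnd g h => fsat e g /\ fsat e h
  | FOr g h => fsat e g \/ fsat e h
  | FImp g h => fsat e g -> fsat e h
  | FAll i g => forall a : A, fsat (upd e i a) g
  | FEx i g => exists a : A, fsat (upd e i a) g
  end.

Definition env2 (l y : A) : nat -> A :=
  fun j => if j == 0%N then l else if j == 1%N then y else 0.

End Semantics.

Definition deg1 (R : fieldType) (l : {poly R}) : Prop := size l = 2%N.

Definition PPOW (R : fieldType) (p : nat) (l : {poly R}) : {poly R} -> Prop :=
  fun y => exists k : nat, (0 < k)%N /\ y = l ^+ (p ^ k).

From mathcomp Require Import all_boot all_order all_algebra.
Set Implicit Arguments. Unset Strict Implicit. Unset Printing Implicit Defensive.
Import GRing.Theory.

(* Over a field R, write only_power_divisors a b when every divisor of b is a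
   unit or a multiple of a; this is first-order in the language of rings.
   For l of degree 1 (associate to X - r) it says exactly that b is
   associate to a power of l.  The formula psi(l, y) states
     y <> 0,  y <> l,  l | y,  only_power_divisors l y,
     only_power_divisors (l + 1) (y + 1).
   The last two clauses make y associate to l^n and y + 1 associate to
   (l + 1)^m; comparing values at r, sizes and leading coefficients gives
   y = l^n and l^n + 1 = (l + 1)^n.  In characteristic p this identity forces
   n to be a power of p: if p | n we descend through the injective Frobenius
   x |-> x^p, otherwise differentiating and evaluating at r gives n = 1.
   Conversely l^(p^k) satisfies psi because x |-> x^(p^k) is additive. *)

(* The formula expressing only_power_divisors, for terms a and b not
   mentioning the bound variables 2, 3 and 4. *)
Definition only_power_divisors_form (a b : rterm) : rform :=
  FAll 2 (FImp (FEx 3 (FEq (TMul (TVar 2) (TVar 3)) b))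
    (FOr (FEx 4 (FEq (TMul (TVar 2) (TVar 4)) TOne))
         (FEx 4 (FEq (TVar 2) (TMul a (TVar 4)))))).

Definition ppow_form : rform :=
  FAnd (FNot (FEq (TVar 1) TZero))
  (FAnd (FNot (FEq (TVar 1) (TVar 0)))
  (FAnd (FEx 4 (FEq (TVar 1) (TMul (TVar 0) (TVar 4))))
  (FAnd (only_power_divisors_form (TVar 0) (TVar 1))
        (only_power_divisors_form (TAdd (TVar 0) TOne) (TAdd (TVar 1) TOne))))).

Local Open Scope ring_scope.

Definition only_power_divisors (A : comNzRingType) (a b : A) : Prop :=
  forall d, (exists e, d * e = b) ->
    (exists v, d * v = 1) \/ (exists w, d = a * w).

Lemma fsat_ppow_form (A : comNzRingType) (l y : A) :
  fsat (env2 l y) ppow_form <->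
  y <> 0 /\ y <> l /\ (exists w, y = l * w) /\
  only_power_divisors l y /\ only_power_divisors (l + 1) (y + 1).
Proof. by []. Qed.

Section LinearPowers.
Variable R : fieldType.
Implicit Types a b d l : {poly R}.

Lemma multiple_dvdpE a b : (exists w, b = a * w) <-> a %| b.
Proof.
split=> [[w ->]|/dvdpP[w ->]]; first exact: dvdp_mulr.
by exists w; rewrite mulrC.
Qed.

Lemma only_power_divisorsE a b :
  only_power_divisors a b <-> forall d, d %| b -> d %| 1 \/ a %| d.
Proof.
have dvdE d b' : (exists e, d * e = b') <-> d %| b'.
  split=> [[e de]|/multiple_dvdpE[e de]]; last by exists e.
  by apply/multiple_dvdpE; exists e.
split=> opd d /dvdE db.
  by have [/dvdE|/multiple_dvdpE] := opd d db; [left|right].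
by have [/dvdE|/multiple_dvdpE] := opd d db; [left|right].
Qed.

Lemma size2_eqp_XsubC l : size l = 2%N -> exists r, l %= 'X - r%:P.
Proof.
move=> size_l; have [r root_l] := poly2_root size_l; exists r.
by rewrite eqp_sym -dvdp_size_eqp ?dvdp_XsubCl // size_XsubC size_l.
Qed.

Lemma size2_exp l n : size l = 2%N -> size (l ^+ n) = n.+1.
Proof.
move=> /size2_eqp_XsubC[r eq_l].
by rewrite (eqp_size (eqp_exp n eq_l)) size_exp_XsubC.
Qed.

Lemma size2_deriv_neq0 l : size l = 2%N -> l^`() != 0.
Proof.
move=> size_l; have [r /eqpfP ->] := size2_eqp_XsubC size_l.
have l0 : l != 0 by rewrite -size_poly_eq0 size_l.
rewrite derivZ derivXsubC scaler_eq0 oner_eq0 orbF mulf_eq0 invr_eq0.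
by rewrite !lead_coef_eq0 polyXsubC_eq0 (negPf l0).
Qed.

(* For linear l, being power-like over l means being associate to a power
   of l: the divisors of (X - r)^n are the associates of the (X - r)^k. *)
Lemma only_power_divisors_size2 l b : size l = 2%N ->
  only_power_divisors l b <-> exists n, b %= l ^+ n.
Proof.
move=> size_l; have [r eq_l] := size2_eqp_XsubC size_l.
have eq_pow n : l ^+ n %= ('X - r%:P) ^+ n by apply: eqp_exp.
have dvd_lE d : l %| d = root d r by rewrite (eqp_dvdl _ eq_l) dvdp_XsubCl.
split => [/only_power_divisorsE opd|[n eq_b]].
  have [b0|b0] := eqVneq b 0.
    (* l + 1 divides 0 but is neither a unit nor a multiple of l *)
    have [] := opd (l + 1); first by rewrite b0 dvdp0.
      by rewrite dvdp1 size_polyDl size_l ?size_poly1.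
    by rewrite dvdp_addr ?dvdpp // dvdp1 size_l.
  have [n [q /implyP/(_ b0) qr def_b]] := multiplicity_XsubC b r.
  exists n; have qb : q %| b by rewrite def_b dvdp_mulr.
  have [|] := opd q qb; last by rewrite dvd_lE (negPf qr).
  rewrite dvdp1 size_poly_eq1 => q1; rewrite def_b eqp_sym.
  by apply: eqp_trans (eq_pow n) _; rewrite -[X in X %= _]mul1r eqp_sym eqp_mulr.
apply/only_power_divisorsE => d; rewrite (eqp_dvdr _ eq_b) (eqp_dvdr _ (eq_pow n)).
move=> /dvdp_exp_XsubCP[[|k] _ eq_d].
  by left; rewrite (eqp_dvdl _ eq_d) dvdpp.
by right; rewrite dvd_lE -dvdp_XsubCl (eqp_dvdr _ eq_d) exprS dvdp_mulr.
Qed.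

Lemma eqp_lead_coef_eq a b : a %= b -> lead_coef a = lead_coef b -> a = b.
Proof.
move=> /eqp_eq eq_ab lc_ab; have [b0|b0] := eqVneq b 0.
  by move/eqP: lc_ab; rewrite b0 lead_coef0 lead_coef_eq0 => /eqP.
have lb0 : lead_coef b != 0 by rewrite lead_coef_eq0.
by apply: (scalerI lb0); rewrite eq_ab lc_ab.
Qed.

Lemma eqp_horner_eq a b (x : R) : a %= b -> a.[x] = b.[x] -> b.[x] != 0 -> a = b.
Proof.
move=> /eqpfP def_a ab_x bx0; rewrite def_a; set c := _ / _ in def_a *.
suff -> : c = 1 by rewrite scale1r.
by apply: (mulIf bx0); rewrite mul1r -hornerZ -def_a.
Qed.

Lemma associated_shifted_powers l y n m : size l = 2%N -> l %| y ->
  y %= l ^+ n -> y + 1 %= (l + 1) ^+ m -> y = l ^+ n /\ y + 1 = (l + 1) ^+ n.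
Proof.
move=> size_l l_y eq_y eq_y1; have [r eq_l] := size2_eqp_XsubC size_l.
have l_r : l.[r] = 0 by apply/rootP; rewrite (eqp_root eq_l) root_XsubC.
have y_r : y.[r] = 0 by apply/rootP/(root_dvdp l_y)/rootP.
have n_gt0 : (0 < n)%N.
  by case: n eq_y => // /eqp_root/(_ r); rewrite rootE y_r eqxx expr0 (negPf (root1 r)).
have size_y : size y = n.+1 by rewrite (eqp_size eq_y) size2_exp.
have size_y1 : size (y + 1) = n.+1 by rewrite size_polyDl size_y ?size_poly1.
have size_l1 : size (l + 1) = 2%N by rewrite size_polyDl size_l ?size_poly1.
have y1E : y + 1 = (l + 1) ^+ m.
  have one_r : ((l + 1) ^+ m).[r] = 1.
    by rewrite horner_exp hornerD l_r hornerC add0r expr1n.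
  apply: (eqp_horner_eq (x := r) eq_y1); rewrite one_r ?oner_neq0 //.
  by rewrite hornerD y_r hornerC add0r.
have mn : m = n by move: size_y1; rewrite y1E size2_exp // => -[].
rewrite mn in y1E; split => //; apply: (eqp_lead_coef_eq eq_y).
rewrite -(lead_coefDl (q := 1)) ?size_y ?size_poly1 // y1E !lead_coef_exp.
by rewrite lead_coefDl ?size_l ?size_poly1.
Qed.

End LinearPowers.

Lemma exprD_pchar_exp (A : comNzSemiRingType) (p k : nat) (x y : A) :
  p \in [pchar A] -> (x + y) ^+ (p ^ k) = x ^+ (p ^ k) + y ^+ (p ^ k).
Proof.
move=> chp; apply: exprDn_pchar.
by rewrite pnatX (eq_pnat _ (pcharf_eq chp)) pnat_id // (pcharf_prime chp).
Qed.

Lemma expr_pchar_inj (A : idomainType) (p : nat) (x y : A) :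
  p \in [pchar A] -> x ^+ p = y ^+ p -> x = y.
Proof.
move=> chp eq_xy; apply/eqP; rewrite -subr_eq0.
have := pFrobenius_autB_comm chp (mulrC x y).
rewrite !pFrobenius_autE eq_xy subrr => /eqP.
by rewrite expf_eq0 => /andP[].
Qed.

Lemma shift_power_pchar_descent (A : idomainType) (p m : nat) (x : A) :
  p \in [pchar A] -> x ^+ (m * p) + 1 = (x + 1) ^+ (m * p) ->
  x ^+ m + 1 = (x + 1) ^+ m.
Proof.
move=> chp; rewrite !exprM => eq_mp; apply: (expr_pchar_inj chp).
by rewrite -[p]expn1 exprD_pchar_exp // expn1 expr1n.
Qed.

(* If n is invertible in R, differentiating l^n + 1 = (l + 1)^n and
   evaluating at a root of l gives 0^(n-1) = 1, hence n = 1. *)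
Lemma shift_power_unit_exponent (R : fieldType) (l : {poly R}) (r : R) (n : nat) :
  root l r -> l^`() != 0 -> n%:R != 0 :> R ->
  l ^+ n + 1 = (l + 1) ^+ n -> n = 1%N.
Proof.
move=> lr dl0 n0 eq_n; case: n n0 eq_n => [|n] n0 eq_n; first by rewrite eqxx in n0.
have n0' : n.+1%:R != 0 :> {poly R} by rewrite -polyC_natr polyC_eq0.
have /eqP := congr1 deriv eq_n.
rewrite derivD derivC addr0 !deriv_exp derivD derivC addr0 /=.
rewrite -[X in X == _]mulr_natr -[X in _ == X]mulr_natr (inj_eq (mulIf n0')).
rewrite (inj_eq (mulfI dl0)) => /eqP/(congr1 (horner^~ r)).
rewrite !horner_exp hornerD (rootP lr) hornerC add0r expr1n.
by case: n {eq_n n0 n0'} => // n; rewrite expr0n => /eqP; rewrite eq_sym oner_eq0.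
Qed.

Lemma shift_power_exponent (R : fieldType) (p : nat) (l : {poly R}) (r : R) (n : nat) :
  p \in [pchar R] -> root l r -> l^`() != 0 ->
  l ^+ n + 1 = (l + 1) ^+ n -> exists k, n = (p ^ k)%N.
Proof.
move=> chp lr dl0; have p_prime := pcharf_prime chp.
have chp' : p \in [pchar {poly R}] by rewrite pchar_poly.
elim/ltn_ind: n => n IHn eq_n.
have [/dvdnP[m def_n]|p_n] := boolP (p %| n)%N; last first.
  rewrite (dvdn_pcharf chp) in p_n.
  by exists 0%N; rewrite (shift_power_unit_exponent lr dl0 p_n eq_n).
have m_gt0 : (0 < m)%N.
  case: m def_n => // def_n; move: eq_n; rewrite def_n mul0n !expr0 => /eqP.
  by rewrite -subr_eq0 addrK oner_eq0.
have lt_mn : (m < n)%N by rewrite def_n ltn_Pmulr ?prime_gt1.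
have eq_m : l ^+ m + 1 = (l + 1) ^+ m.
  by apply: shift_power_pchar_descent chp' _; rewrite -def_n.
have [k def_m] := IHn m lt_mn eq_m.
by exists k.+1; rewrite def_n def_m expnSr.
Qed.

Theorem corollary2p2 :
  exists psi : rform,
    forall (R : fieldType) (p : nat), p \in [pchar R] ->
    forall l : {poly R}, deg1 l ->
    forall y : {poly R}, fsat (env2 l y) psi <-> PPOW p l y.
Proof.
exists ppow_form => R p chp l size_l y.
apply: iff_trans (fsat_ppow_form l y) _.
have size_l1 : size (l + 1) = 2%N by rewrite size_polyDl size_l ?size_poly1.
split => [[_ [y_neq_l [/multiple_dvdpE l_y [opd opd1]]]]|[k [k_gt0 ->]]].
  have [r eq_l] := size2_eqp_XsubC size_l.
  have l_r : root l r by rewrite (eqp_root eq_l) root_XsubC.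
  have [n eq_y] := (only_power_divisors_size2 y size_l).1 opd.
  have [m eq_y1] := (only_power_divisors_size2 (y + 1) size_l1).1 opd1.
  have [yE y1E] := associated_shifted_powers size_l l_y eq_y eq_y1.
  have shift_n : l ^+ n + 1 = (l + 1) ^+ n by rewrite -yE.
  have [k nE] := shift_power_exponent chp l_r (size2_deriv_neq0 size_l) shift_n.
  exists k; split; last by rewrite yE nE.
  by rewrite lt0n; apply: contra_notN y_neq_l => /eqP k0; rewrite yE nE k0 expr1.
have pk_gt1 : (1 < p ^ k)%N.
  by rewrite -[1%N](expn0 p) ltn_exp2l ?prime_gt1 ?(pcharf_prime chp).
have l0 : l != 0 by rewrite -size_poly_eq0 size_l.
split; first by apply/eqP; rewrite expf_neq0.
split.
  move=> eq_pk; have := size2_exp (p ^ k) size_l; rewrite eq_pk size_l => -[pk1].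
  by rewrite pk1 ltnn in pk_gt1.
split; first by exists (l ^+ (p ^ k).-1); rewrite -exprS prednK // ltnW.
split; first by apply/(only_power_divisors_size2 _ size_l); exists (p ^ k)%N; exact: eqpxx.
have chp' : p \in [pchar {poly R}] by rewrite pchar_poly.
have -> : l ^+ (p ^ k) + 1 = (l + 1) ^+ (p ^ k) by rewrite exprD_pchar_exp // expr1n.
by apply/(only_power_divisors_size2 _ size_l1); exists (p ^ k)%N; exact: eqpxx.
Qed.
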